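(* Let $r\geq 3$ be odd and let $2<m<n$ be integers. Put $$S=1+\sum_{k=1}^{(r-1)/2} n(m-1)^{k}(n-1)^{k-1}=1+n(m-1)+n(m-1)^2(n-1)+\cdots+n(m-1)^{\frac{r-1}{2}}(n-1)^{\frac{r-3}{2}},$$ and let $x$ be the smallest non-negative integer such that $(S+x)\cdot n$ is divisible by $m$. Then every $(m,n;2r)$-bipartite biregular cage has at least $(S+x)\left(1+\frac{n}{m}\right)$ vertices.
   Context: For integers $a,b\geq 2$ and even $g\ge 4$, an $(a,b;g)$-bipartite biregular graph is a finite simple bipartite graph of girth exactly $g$ in which all vertices of one bipartition class have degree $a$ and all vertices of the other class have degree $b$. An $(a,b;g)$-bipartite biregular cage is such a graph of minimum possible order. *)

From mathcomp Require Import all_boot all_order all_algebra.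
Set Implicit Arguments. Unset Strict Implicit. Unset Printing Implicit Defensive.
Import Order.TTheory GRing.Theory Num.Theory.

Definition simple_graph (T : finType) (e : rel T) : Prop :=
  symmetric e /\ irreflexive e.

Definition is_cycle (T : finType) (e : rel T) (c : seq T) : bool :=
  (2 < size c) && ucycleb e c.

Definition has_girth (T : finType) (e : rel T) (g : nat) : Prop :=
  (exists c, is_cycle e c /\ size c = g) /\
  (forall c, is_cycle e c -> g <= size c).

Definition deg (T : finType) (e : rel T) (v : T) : nat := #|[set w | e v w]|.

Definition bb_graph (a b g : nat) (T : finType) (e : rel T) : Prop :=
  simple_graph e /\
  (exists A : {set T},
     (forall u v, e u v -> (u \in A) != (v \in A)) /\
     (forall v, v \in A -> deg e v = a) /\
     (forall v, v \notin A -> deg e v = b)) /\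
  has_girth e g.

Definition bb_cage (a b g : nat) (T : finType) (e : rel T) : Prop :=
  bb_graph a b g e /\
  (forall (T' : finType) (e' : rel T'), bb_graph a b g e' -> #|T| <= #|T'|).

Definition S_bound (r m n : nat) : nat :=
  1 + \sum_(1 <= k < (r.-1)./2 + 1) n * (m - 1) ^ k * (n - 1) ^ (k - 1).

From mathcomp Require Import all_boot all_order all_algebra zify ring.
Import Order.TTheory GRing.Theory Num.Theory.
Set Implicit Arguments. Unset Strict Implicit. Unset Printing Implicit Defensive.

(* Let A and B be the classes of degree m and n, and fix v in B.  For
   h = (r-1)/2 we have 4h < 2r, so two simple paths of even length at most 2h
   ending at v cannot start at the same vertex (they would close a cycle of
   length at most 4h): their far ends are distinct vertices of B.  Extending
   paths alternately by m-1 and n-1 new neighbours shows there are at least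
   n(m-1)^j(n-1)^(j-1) such paths of length 2j, hence |B| >= S.  Double
   counting edges gives |A| m = |B| n, so m divides |B| n and minimality of x
   yields |B| >= S + x; finally |V| = |B| (1 + n/m). *)

Section PathsToCycles.

Variables (T : finType) (e : rel T).
Hypothesis sym_e : symmetric e.

Lemma join_paths_cycle x a p q :
  path e x (rcons p a) -> path e x (rcons q a) ->
  uniq (x :: rcons p a) -> uniq (x :: rcons q a) -> ~~ has (mem q) p ->
  0 < size p + size q -> is_cycle e (x :: p ++ a :: rev q).
Proof.
move=> xpa xqa upa uqa pq_disj pq_gt0; apply/and3P; split.
- by rewrite /= size_cat /= size_rev; lia.
- rewrite /cycle -cat_rcons rcons_cat -rev_cons cat_path last_rcons xpa /=.
  rewrite -(last_rcons x q a) -(belast_rcons x q a) rev_path.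
  by rewrite (eq_path (e' := e)) // => u w; rewrite sym_e.
move: upa uqa; rewrite !cons_uniq !rcons_uniq !mem_rcons !inE !negb_or.
move=> /andP[/andP[xa xp] /andP[ap up]] /andP[/andP[_ xq] /andP[aq uq]].
rewrite mem_cat inE mem_rev !negb_or xp xa xq cat_uniq up /= mem_rev aq.
rewrite rev_uniq uq andbT.
by rewrite negb_or ap has_rev has_sym pq_disj.
Qed.

Lemma diverging_paths_cycle x y z p q :
  y != z -> path e x (y :: p) -> path e x (z :: q) ->
  uniq (x :: y :: p) -> uniq (x :: z :: q) -> last y p = last z q ->
  exists2 c, is_cycle e c & size c <= (size p).+1 + (size q).+1.
Proof.
set P := y :: p; set Q := z :: q => yz xP xQ uP uQ lPQ.
have PQ : has (mem Q) P.
  by apply/hasP; exists (last y p); [exact: mem_last | rewrite /= lPQ mem_last].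
(* [a] is the first vertex of [P] on [Q]: go out along [P] to [a] and come
   back along [Q]. *)
set i := find (mem Q) P; have iP : i < size P by rewrite -has_find.
set a := nth x P i; have aQ : a \in Q by apply: nth_find.
set j := index a Q; have jQ : j < size Q by rewrite index_mem.
have Pa : take i.+1 P = rcons (take i P) a by rewrite (take_nth x iP).
have Qa : take j.+1 Q = rcons (take j Q) a by rewrite (take_nth x jQ) nth_index.
exists (x :: take i P ++ a :: rev (take j Q)); last first.
  rewrite /= size_cat /= size_rev (size_takel (ltnW iP)).
  by rewrite (size_takel (ltnW jQ)) -addSn leq_add.
apply: (join_paths_cycle (a := a) (p := take i P) (q := take j Q)).
- by rewrite -Pa take_path.
- by rewrite -Qa take_path.
- by rewrite -Pa (take_uniq i.+2 uP).
- by rewrite -Qa (take_uniq j.+2 uQ).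
- apply/hasPn => w /(nthP x)[k]; rewrite (size_takel (ltnW iP)) => ki <-.
  by rewrite nth_take //; apply: contraFN (before_find x ki) => /mem_take.
rewrite (size_takel (ltnW iP)) (size_takel (ltnW jQ)) addn_gt0 !lt0n.
apply: contraNT yz.
rewrite negb_or !negbK => /andP[/eqP i0 /eqP j0].
have aP0 : a = y by rewrite /a i0.
have aQ0 : a = z by rewrite -(nth_index x aQ) -/j j0.
by rewrite -aP0 -aQ0.
Qed.

Lemma distinct_paths_cycle x p q :
  path e x p -> path e x q -> uniq (x :: p) -> uniq (x :: q) ->
  last x p = last x q -> p != q ->
  exists2 c, is_cycle e c & size c <= size p + size q.
Proof.
elim: p x q => [|y p IHp] x [|z q] // xP xQ uP uQ lPQ pq.
- by move: lPQ uQ => /= ->; rewrite /= mem_last.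
- by move: lPQ uP => /= <-; rewrite /= mem_last.
have [yz|yz] := eqVneq y z; last exact: diverging_paths_cycle yz xP xQ uP uQ lPQ.
subst z.
move: xP xQ uP uQ => /= /andP[_ yP] /andP[_ yQ] /andP[_ uP] /andP[_ uQ].
have [|c cyc_c size_c] := IHp y q yP yQ uP uQ lPQ; first by apply: contraNneq pq => ->.
by exists c; rewrite // addSn addnS; apply/leqW/leqW.
Qed.

End PathsToCycles.

Section SimplePaths.

Variables (T : finType) (e : rel T).
Hypotheses (sym_e : symmetric e) (irr_e : irreflexive e).

Definition path_extensions (v : T) (p : seq T) : {set T} :=
  [set w | e (head v p) w & w \notin p].

(* A path is listed from its far end: [head v p] is its far end, [last] is [v]. *)
Fixpoint simple_paths_to (v : T) (k : nat) : seq (seq T) :=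
  if k is k'.+1 then
    [seq w :: p | p <- simple_paths_to v k', w <- enum (path_extensions v p)]
  else [:: [:: v]].

Lemma size_simple_paths_toS v k :
  size (simple_paths_to v k.+1) =
  sumn [seq #|path_extensions v p| | p <- simple_paths_to v k].
Proof. by rewrite size_allpairs_dep; congr sumn; apply: eq_map => p; rewrite cardE. Qed.

Lemma uniq_simple_paths_to v k : uniq (simple_paths_to v k).
Proof.
elim: k => //= k IHk; apply: allpairs_uniq_dep => // [p _|]; first exact: enum_uniq.
by move=> [p1 w1] [p2 w2] _ _ [-> ->].
Qed.

Lemma size_simple_paths_to1 v : size (simple_paths_to v 1) = deg e v.
Proof.
rewrite size_simple_paths_toS /= addn0; apply: eq_card => w.
by rewrite !inE /=; case: (eqVneq w v) => [->|_]; rewrite ?irr_e ?andbT.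
Qed.

Lemma simple_paths_toP v k p : p \in simple_paths_to v k ->
  exists u rest,
    [/\ p = u :: rest, path e u rest, uniq p, last u rest = v & size rest = k].
Proof.
elim: k p => [|k IHk] p /=; first by rewrite inE => /eqP ->; exists v, [::].
case/allpairsPdep=> q [w [/IHk[u [rest [-> path_q uniq_q <- <-]]]]].
rewrite mem_enum inE /= => /andP[euw wq] ->.
by exists w, (u :: rest); split; rewrite //= ?wq // sym_e euw.
Qed.

Lemma size_simple_path_to v k p : p \in simple_paths_to v k -> size p = k.+1.
Proof. by case/simple_paths_toP=> u [rest [-> _ _ _ <-]]. Qed.

Variable g : nat.
Hypothesis girth_ge : forall c, is_cycle e c -> g <= size c.

Lemma simple_paths_to_head_inj v a b p q : a + b < g ->
  p \in simple_paths_to v a -> q \in simple_paths_to v b ->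
  head v p = head v q -> p = q.
Proof.
move=> ltg /simple_paths_toP[u [rp [-> up uniq_p lp size_p]]].
move=> /simple_paths_toP[u' [rq [-> uq uniq_q lq size_q]]] /= eq_u'.
subst u'; apply/eqP; rewrite eqseq_cons eqxx /=; apply: contraTT ltg => ne.
have [c cyc_c size_c] :=
  distinct_paths_cycle sym_e up uq uniq_p uniq_q (etrans lp (esym lq)) ne.
by rewrite -leqNgt -size_p -size_q; apply: leq_trans (girth_ge cyc_c) size_c.
Qed.

Lemma adj_simple_path_to v k u rest w : k.+1 < g ->
  u :: rest \in simple_paths_to v k -> e u w -> w \in u :: rest ->
  w = head u rest.
Proof.
move=> ltg /simple_paths_toP[_ [_ [[<- <-] path_ur uniq_ur _ size_r]]] euw.
rewrite inE => /predU1P[wu|wr]; first by move: euw; rewrite wu irr_e.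
have [//|w_ne] := eqVneq w (head u rest).
(* Otherwise the edge [u w] and the part of [rest] up to [w] close a short cycle. *)
set j := index w rest; have jr : j < size rest by rewrite index_mem.
have lw : last u (take j.+1 rest) = w by rewrite (take_nth u jr) last_rcons nth_index.
have path_uw : path e u [:: w] by rewrite /= euw.
have uniq_uw : uniq [:: u; w].
  by rewrite /= inE andbT; apply: contraTneq wr => <-; move: uniq_ur => /andP[].
have ne : [:: w] != take j.+1 rest.
  by apply: contra w_ne => /eqP/(congr1 (head u)) /= ->; case: (rest).
have [c cyc_c size_c] := distinct_paths_cycle sym_e path_uw
  (take_path j.+1 path_ur) uniq_uw (take_uniq j.+2 uniq_ur) (esym lw) ne.
have := leq_trans (girth_ge cyc_c) size_c; rewrite /= size_takel // => g_le.
by exfalso; clearbody j; lia.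
Qed.

Lemma size_simple_paths_toS_ge v k d : k.+1 < g ->
  {in simple_paths_to v k, forall p, d <= (deg e (head v p)).-1} ->
  d * size (simple_paths_to v k) <= size (simple_paths_to v k.+1).
Proof.
move=> ltg deg_ge; rewrite size_simple_paths_toS sumnE big_map -sum1_size big_distrr.
rewrite big_seq [leqRHS]big_seq; apply: leq_sum => p p_k; rewrite /= muln1.
apply: leq_trans (deg_ge p p_k) _.
have [u [rest [p_eq _ _ _ _]]] := simple_paths_toP p_k; rewrite p_eq /= in p_k *.
have sub : [set w | e u w] \subset head u rest |: path_extensions v (u :: rest).
  apply/subsetP => w; rewrite inE => euw.
  have [/(adj_simple_path_to ltg p_k euw) ->|w_p] := boolP (w \in u :: rest).
    exact: setU11.
  by rewrite setU1r // in_set euw w_p.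
have := subset_leq_card sub; rewrite cardsU1 /deg; case: (_ \notin _) => /=; lia.
Qed.

End SimplePaths.

Section BipartiteBiregular.

Variables (T : finType) (e : rel T) (A : {set T}) (m n : nat).
Hypotheses (sym_e : symmetric e) (irr_e : irreflexive e).
Hypothesis bip : forall u w, e u w -> (u \in A) != (w \in A).
Hypothesis deg_in : forall u, u \in A -> deg e u = m.
Hypothesis deg_out : forall u, u \notin A -> deg e u = n.

Lemma bipartite_double_count : #|A| * m = #|~: A| * n.
Proof.
have deg_sum u : deg e u = \sum_w (e u w : nat).
  by rewrite /deg -sum1dep_card big_mkcond; apply: eq_bigr => w _; case: (e u w).
rewrite -!sum_nat_const.
transitivity (\sum_(u in A) \sum_w (e u w : nat)).
  by apply: eq_bigr => u u_A; rewrite -(deg_in u_A) deg_sum.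
rewrite exchange_big [RHS]big_mkcond; apply: eq_bigr => w _; rewrite inE.
have [w_A|w_B] /= := boolP (w \in A).
  rewrite big1 // => u u_A; case: (boolP (e u w)) => // euw.
  by move: (bip euw); rewrite u_A w_A.
rewrite -(deg_out w_B) deg_sum big_mkcond; apply: eq_bigr => u _.
have [u_A|u_B] := boolP (u \in A); first by rewrite sym_e.
case: (boolP (e w u)) => // ewu.
by move: (bip ewu); rewrite (negbTE u_B) (negbTE w_B).
Qed.

Lemma path_bipartite_mem u s :
  path e u s -> (u \in A) = odd (size s) (+) (last u s \in A).
Proof.
elim: s u => [//|w s IHs] u /= /andP[euw /IHs w_A].
by rewrite addNb -w_A; move: (bip euw); case: (u \in A); case: (w \in A).
Qed.

Variable v : T.
Hypothesis v_out : v \notin A.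

Lemma head_simple_path_to_mem k p :
  p \in simple_paths_to e v k -> (head v p \in A) = odd k.
Proof.
case/(simple_paths_toP sym_e)=> u [rest [-> path_ur _ last_ur <-]].
by rewrite /= (path_bipartite_mem path_ur) last_ur (negbTE v_out) addbF.
Qed.

Variable g : nat.
Hypothesis girth_ge : forall c, is_cycle e c -> g <= size c.

Lemma size_simple_paths_to_step k : k.+1 < g ->
  (if odd k then m.-1 else n.-1) * size (simple_paths_to e v k)
    <= size (simple_paths_to e v k.+1).
Proof.
move=> ltg; apply: (size_simple_paths_toS_ge sym_e irr_e girth_ge ltg) => p p_k.
have := head_simple_path_to_mem p_k.
by case: ifP => k_odd head_A; [rewrite deg_in | rewrite deg_out]; rewrite ?head_A ?k_odd.
Qed.

Lemma size_simple_paths_to_even j : 2 * j.+1 < g ->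
  n * m.-1 ^ j.+1 * n.-1 ^ j <= size (simple_paths_to e v (2 * j.+1)).
Proof.
elim: j => [|j IHj] ltg.
  have := size_simple_paths_to_step (k := 1) ltg.
  by rewrite (size_simple_paths_to1 irr_e) deg_out // expn1 expn0 muln1 mulnC.
rewrite [2 * j.+2]mulnS add2n in ltg *.
have step_even := size_simple_paths_to_step (k := 2 * j.+1) (ltnW ltg).
have step_odd := size_simple_paths_to_step (k := (2 * j.+1).+1) ltg.
rewrite oddM in step_even; rewrite oddS oddM in step_odd.
have -> : n * m.-1 ^ j.+2 * n.-1 ^ j.+1 =
          m.-1 * (n.-1 * (n * m.-1 ^ j.+1 * n.-1 ^ j)) by rewrite !expnS; ring.
apply: leq_trans step_odd; apply: leq_mul => //.
apply: leq_trans step_even; apply: leq_mul => //.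
exact: IHj (ltnW (ltnW ltg)).
Qed.

Lemma sum_size_simple_paths_to_even h : 4 * h < g ->
  \sum_(0 <= j < h.+1) size (simple_paths_to e v (2 * j)) <= #|~: A|.
Proof.
move=> ltg.
set L := [seq head v p | j <- iota 0 h.+1, p <- simple_paths_to e v (2 * j)].
have size_L : size L = \sum_(0 <= j < h.+1) size (simple_paths_to e v (2 * j)).
  by rewrite size_allpairs_dep sumnE big_map.
have uniq_L : uniq L.
  apply: allpairs_uniq_dep => [|j _|]; rewrite ?iota_uniq ?uniq_simple_paths_to //.
  move=> t t' /allpairsPdep[j [p [j_h p_j ->]]].
  move=> /allpairsPdep[j' [q [j'_h q_j' ->]]] /= eq_head.
  have p_q : p = q.
    apply: (simple_paths_to_head_inj sym_e girth_ge _ p_j q_j' eq_head).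
    by move: j_h j'_h; rewrite !mem_iota; lia.
  subst q; suff -> : j = j' by [].
  have := size_simple_path_to sym_e p_j.
  by rewrite (size_simple_path_to sym_e q_j'); lia.
rewrite -size_L -(card_uniqP uniq_L); apply/subset_leq_card/subsetP => u.
case/allpairsPdep=> j [p [_ p_j ->]]; rewrite inE.
by rewrite (head_simple_path_to_mem p_j) oddM.
Qed.

Lemma moore_bound h : 4 * h < g ->
  1 + \sum_(1 <= k < h + 1) n * (m - 1) ^ k * (n - 1) ^ (k - 1) <= #|~: A|.
Proof.
move=> ltg; apply: leq_trans (sum_size_simple_paths_to_even ltg).
rewrite big_nat_recl // addn1 big_add1 /= leq_add2l.
rewrite big_nat_cond [leqRHS]big_nat_cond; apply: leq_sum => j /andP[/andP[_ j_h] _].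
rewrite !subn1 succnK; apply: size_simple_paths_to_even; lia.
Qed.

End BipartiteBiregular.

Lemma bipartite_order_ge (R : numFieldType) (T : finType) (A : {set T})
    (m n s : nat) :
  0 < m -> #|A| * m = #|~: A| * n -> s <= #|~: A| ->
  (s%:R * (1 + n%:R / m%:R) <= #|T|%:R :> R)%R.
Proof.
move=> m_gt0 double_count s_le.
have card_A : (#|A|%:R = #|~: A|%:R * n%:R / m%:R :> R)%R.
  by rewrite -natrM -double_count natrM mulfK // pnatr_eq0 -lt0n.
rewrite -(cardsC A) natrD card_A.
have -> : (#|~: A|%:R * n%:R / m%:R + #|~: A|%:R
           = #|~: A|%:R * (1 + n%:R / m%:R) :> R)%R by ring.
by apply: ler_wpM2r; rewrite ?ler_nat // addr_ge0 ?divr_ge0.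
Qed.

Theorem mainTheorem3 (r m n : nat) (hr3 : 3 <= r) (hrodd : odd r)
  (hm : 2 < m) (hmn : m < n) (x : nat)
  (hx : m %| (S_bound r m n + x) * n)
  (hxmin : forall y, y < x -> ~~ (m %| (S_bound r m n + y) * n))
  (T : finType) (e : rel T) (hcage : bb_cage m n (2 * r) e) :
  ((S_bound r m n + x)%:R * (1 + n%:R / m%:R) <= (#|T|%:R : rat))%R.
Proof.
case: hcage => [[[sym_e irr_e] [[A [bip [deg_in deg_out]]] [[c [cyc_c _]] girth_ge]]] _].
have [v v_out] : exists v, v \notin A.
  case: c cyc_c => [|u [|w c]] // /and3P[_ /andP[euw _] _].
  have [u_A|] := boolP (u \in A); last by exists u.
  by exists w; move: (bip _ _ euw); rewrite u_A.
have double_count := bipartite_double_count sym_e bip deg_in deg_out.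
have S_le : S_bound r m n <= #|~: A|.
  apply: (moore_bound sym_e irr_e bip deg_in deg_out v_out girth_ge).
  by have := odd_double_half r.-1; lia.
have Sx_le : S_bound r m n + x <= #|~: A|.
  (* [#|~: A| - S_bound r m n] is itself an admissible offset. *)
  rewrite -leq_subRL // leqNgt; apply/negP => lt_x.
  by have := hxmin _ lt_x; rewrite subnKC // -double_count dvdn_mull.
by apply: bipartite_order_ge double_count Sx_le; lia.
Qed.
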